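(* Let $T$ be a tree and $s\in C$ any scenario of $T$. Then $T$ has a prime broadcast center under $s$.
   Context: $T$ is a finite tree with vertex set $V(T)$, $|V(T)|=n$, and edge set $E(T)$. Each edge $(u,v)$ carries an interval $[w^-_{u,v},w^+_{u,v}]$ of non-negative reals. A scenario $s$ assigns to every edge $(u,v)$ a weight $w^s_{u,v}\in[w^-_{u,v},w^+_{u,v}]$; $C$ is the set of all scenarios. A constant $\rho>0$ (connection time) is fixed. Broadcast time (postal model): for a subtree $G$ of $T$ and $u\in V(G)$, $b^s(u,G)$ is defined recursively by $b^s(u,G)=0$ if $u$ has no neighbour in $G$; otherwise, if $v_1,\dots,v_h$ are the neighbours of $u$ in $G$ and $G_{v}$ denotes the component of $G-u$ containing $v$, then $b^s(u,G)=\min_{\pi}\max_{1\le k\le h}\big(k\rho+w^s_{u,v_{\pi(k)}}+b^s(v_{\pi(k)},G_{v_{\pi(k)}})\big)$, the minimum over all permutations $\pi$ of $\{1,\dots,h\}$. The set of broadcast centers under $s$ is $B^s=\{u\in V(T): b^s(u,T)\le b^s(v,T)\ \forall v\in V(T)\}$. For distinct $x,y\in V(T)$, $T_{x,y}$ denotes the component of $T-x$ containing $y$, and $\bar T_{x,y}$ denotes the subtree of $T$ induced by $V(T)\setminus V(T_{x,y})$ (it contains $x$). A vertex $\hat\kappa\in B^s$ is a prime broadcast center of $T$ under $s$ if $b^s(\hat\kappa,\bar T_{\hat\kappa,u})\ge b^s(u,\bar T_{u,\hat\kappa})$ for every neighbour $u$ of $\hat\kappa$ in $T$. *)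

From mathcomp Require Import all_boot all_order all_algebra.
From mathcomp Require Import reals.
Set Implicit Arguments. Unset Strict Implicit. Unset Printing Implicit Defensive.
Import Order.TTheory GRing.Theory Num.Theory.
Local Open Scope ring_scope.

Section Broadcast.
Variable V : finType.

Definition simple_graph (e : rel V) : Prop :=
  (forall x y, e x y = e y x) /\ (forall x, ~~ e x x).
Definition graph_connected (e : rel V) : Prop := forall x y, connect e x y.
Definition graph_acyclic (e : rel V) : Prop :=
  forall (x : V) (p : seq V),
    uniq (x :: p) -> (2 <= size p)%N -> path e x p -> ~~ e (last x p) x.
Definition is_tree (e : rel V) : Prop :=
  [/\ (0 < #|V|)%N, simple_graph e, graph_connected e & graph_acyclic e].

Variable R : realType.

Definition is_scenario (e : rel V) (wlo wup s : V -> V -> R) : Prop :=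
  (forall u v, s u v = s v u) /\
  (forall u v, e u v -> wlo u v <= s u v <= wup u v).

Definition seqmin (l : seq R) : R := foldr Num.min (head 0 l) l.
Definition seqmax (l : seq R) : R := foldr Num.max (head 0 l) l.

Definition restr (e : rel V) (A : {set V}) : rel V :=
  [rel a b | [&& e a b, a \in A & b \in A]].

Definition comp (e : rel V) (G : {set V}) (u v : V) : {set V} :=
  [set x | connect (restr e (G :\ u)) v x].

Definition nbrs (e : rel V) (G : {set V}) (u : V) : seq V :=
  enum [set v in G | e u v].

(* postal-model broadcast time, by recursion on a fuel bound;
   ordering p of the neighbours: the k-th (k = 1, 2, ...) is p_(k-1). *)
Fixpoint bt_aux (e : rel V) (rho : R) (s : V -> V -> R) (n : nat)
    (u : V) (G : {set V}) : R :=
  match n with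
  | 0%N => 0
  | n'.+1 =>
      let N := nbrs e G u in
      if N is [::] then 0 else
      seqmin [seq seqmax (mkseq (fun k =>
                 let v := nth u p k in
                 k.+1%:R * rho + s u v + bt_aux e rho s n' v (comp e G u v))
               (size p))
             | p <- permutations N]
  end.

Definition btime (e : rel V) (rho : R) (s : V -> V -> R)
    (u : V) (G : {set V}) : R := bt_aux e rho s #|G| u G.

Definition Tsub (e : rel V) (x y : V) : {set V} := comp e setT x y.
Definition Tbar (e : rel V) (x y : V) : {set V} := ~: Tsub e x y.

Definition broadcast_center (e : rel V) (rho : R) (s : V -> V -> R) (u : V)
  : Prop := forall v, btime e rho s u setT <= btime e rho s v setT.

Definition prime_broadcast_center (e : rel V) (rho : R) (s : V -> V -> R)
    (k : V) : Prop :=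
  broadcast_center e rho s k /\
  forall u, e k u ->
    btime e rho s u (Tbar e u k) <= btime e rho s k (Tbar e k u).

End Broadcast.

(* Start from any broadcast center k.  If some neighbour u of k has
   b(k, Tbar k u) < b(u, Tbar u k), then u is a broadcast center as well: u can
   call k first and then inform its own side one step late, and both parts
   finish by b(k, T), because k itself needs at least rho + s(k,u) + b(u, Tbar u k)
   to inform the side of u.  Moving from k to u strictly shrinks the side left
   behind, so this walk stops, and it stops at a prime broadcast center. *)

From Pilot Require Import Defs.
From mathcomp Require Import all_boot all_order all_algebra.
From mathcomp Require Import reals lra.
Set Implicit Arguments. Unset Strict Implicit. Unset Printing Implicit Defensive.
Import Order.TTheory GRing.Theory Num.Theory.
Local Open Scope ring_scope.

Section SeqExtrema.
Variable R : realType.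

Lemma foldr_min_mem (a : R) l : foldr Num.min a l \in a :: l.
Proof.
elim: l => [|x l IH] /=; first exact: mem_head.
rewrite minEle; case: ifP => _; first by rewrite !inE eqxx orbT.
by move: IH; rewrite !inE => /orP[]->; rewrite ?orbT.
Qed.

Lemma foldr_min_le (a : R) l x : x \in l -> foldr Num.min a l <= x.
Proof.
by elim: l => //= y l IH; rewrite inE ge_min => /predU1P[->|/IH->]; rewrite ?lexx ?orbT.
Qed.

Lemma foldr_max_ge (a : R) l x : x \in l -> x <= foldr Num.max a l.
Proof.
by elim: l => //= y l IH; rewrite inE le_max => /predU1P[->|/IH->]; rewrite ?lexx ?orbT.
Qed.

Lemma foldr_max_le (a : R) l c :
  a <= c -> (forall x, x \in l -> x <= c) -> foldr Num.max a l <= c.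
Proof.
move=> ac; elim: l => //= y l IH le_lc.
by rewrite ge_max le_lc ?mem_head // IH // => x xl; rewrite le_lc // inE xl orbT.
Qed.

Lemma seqmin_mem (l : seq R) : l != [::] -> seqmin l \in l.
Proof.
case: l => // a l _; have := foldr_min_mem a (a :: l).
by rewrite /seqmin /= inE => /predU1P[->|//]; exact: mem_head.
Qed.

Lemma seqmin_le (l : seq R) x : x \in l -> seqmin l <= x.
Proof. exact: foldr_min_le. Qed.

Lemma seqmax_ge (l : seq R) x : x \in l -> x <= seqmax l.
Proof. exact: foldr_max_ge. Qed.

Lemma seqmax_le (l : seq R) c :
  l != [::] -> (forall x, x \in l -> x <= c) -> seqmax l <= c.
Proof.
by case: l => // a l _ le_lc; apply: foldr_max_le => //; apply/le_lc/mem_head.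
Qed.

End SeqExtrema.

Section Broadcast.
Variable V : finType.
Variable e : rel V.
Hypothesis esym : symmetric e.
Hypothesis eirr : irreflexive e.
Hypothesis econn : graph_connected e.
Hypothesis eacyc : graph_acyclic e.

Lemma edge_neq x y : e x y -> x != y.
Proof. by apply: contraTneq => ->; rewrite eirr. Qed.

Lemma restr_sym (A : {set V}) : symmetric (restr e A).
Proof. by move=> x y; rewrite /restr /= esym [(x \in A) && _]andbC. Qed.

Lemma connect_restr_in (A : {set V}) x y :
  x \in A -> connect (restr e A) x y -> y \in A.
Proof.
move=> xA /connectP[p pth ->]; elim: p x xA pth => //= z p IH x _.
by case/andP=> /and3P[_ _ zA]; apply: IH.
Qed.

Lemma connect_restr_sub (A B : {set V}) x y :
  (forall z, connect (restr e A) x z -> z \in B) ->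
  connect (restr e A) x y -> connect (restr e B) x y.
Proof.
move=> AB /connectP[p pth ->]; apply/connectP; exists p => //.
elim: p x pth AB => //= z p IH x /andP[exz pth] AB.
have /and3P[ex _ _] := exz.
rewrite /restr /= ex AB ?connect0 // AB ?connect1 //=.
by apply: IH pth _ => w xw; apply: AB (connect_trans (connect1 exz) xw).
Qed.

Lemma path_restr (A : {set V}) x p :
  path e x p -> all (mem A) (x :: p) -> path (restr e A) x p.
Proof.
elim: p x => //= y p IH x /andP[exy pth] /and3P[xA yA Ap].
by rewrite /restr /= exy xA yA IH //= yA.
Qed.

Lemma comp_sub (G : {set V}) u v :
  v \in G :\ u -> Defs.comp e G u v \subset G :\ u.
Proof. by move=> vG; apply/subsetP => x; rewrite inE; apply: connect_restr_in. Qed.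

Lemma mem_comp_self (G : {set V}) u v : v \in Defs.comp e G u v.
Proof. by rewrite inE connect0. Qed.

Lemma in_Tbar u k : k != u -> u \in Tbar e u k.
Proof.
move=> ku; rewrite inE; apply/negP => /(subsetP (comp_sub _)).
by rewrite !inE eqxx ku => /(_ isT).
Qed.

(* A simple path from b to x through a goes on from a without returning to b. *)
Lemma Tsub_cover a b x : e a b -> x \notin Tsub e a b -> x \in Tsub e b a.
Proof.
move=> eab xT; have /connectP[p0 pth0 xl] := econn b x.
case/shortenP: pth0 xl => p pth up _ xl.
have ap : a \in p.
  apply: contraNT xT => ap; rewrite inE; apply/connectP; exists p => //.
  apply: path_restr => //; apply/allP => z; rewrite !inE andbT.
  case/predU1P => [->|zp]; first by rewrite eq_sym edge_neq.
  by apply: contraNneq ap => <-.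
case/splitPr: p / ap pth up xl => p1 p2.
rewrite cat_path last_cat /= => /and3P[_ _ pth2] up xl; rewrite inE.
apply/connectP; exists p2 => //; apply: path_restr => //.
apply/allP => z zp2; rewrite !inE andbT; apply: contraTneq zp2 => ->.
by move: up; rewrite /= mem_cat !inE !negb_or => /andP[/and3P[_ -> ->]].
Qed.

(* Otherwise the edge {a, b} would close a cycle through x. *)
Lemma Tsub_disjoint a b x : e a b -> x \in Tsub e a b -> x \notin Tsub e b a.
Proof.
move=> eab; rewrite !inE => bx; apply/negP => ax.
pose e' := [rel y z | restr e (setT :\ a) y z || restr e (setT :\ b) y z].
have e'e : subrel e' e by move=> y z /orP[] /and3P[].
have /connectP[p0 pth0 bl] : connect e' a b.
  apply: (@connect_trans _ _ x).
    by apply: connect_sub ax => y z yz; apply: connect1; rewrite /= yz orbT.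
  rewrite (sym_connect_sym (restr_sym _)) in bx.
  by apply: connect_sub bx => y z yz; apply: connect1; rewrite /= yz.
case/shortenP: pth0 bl => p pth up _ bl.
suff p2 : (2 <= size p)%N.
  by have := eacyc up p2 (sub_path e'e pth); rewrite -bl esym eab.
case: p pth up bl => [|z [|w p]] //=.
- by move=> _ _ ab; rewrite ab eirr in eab.
- by rewrite andbT => + _ bz; rewrite -bz /= /restr /= !inE !eqxx !andbF.
Qed.

Lemma Tbar_edge u k : e u k -> Tbar e u k = Tsub e k u.
Proof.
move=> euk; apply/setP => x; rewrite inE.
apply/idP/idP; first exact: Tsub_cover.
by apply: contraTN => /Tsub_disjoint; apply.
Qed.

Lemma nbr_Tbar u k v : e u k -> e u v -> v != k -> v \in Tbar e u k.
Proof.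
move=> euk euv vk; rewrite Tbar_edge // inE; apply: connect1.
by rewrite /restr /= euv !inE vk edge_neq.
Qed.

Lemma comp_Tbar u k v : v \in Tbar e u k -> v != u ->
  Defs.comp e (Tbar e u k) u v = Tsub e u v.
Proof.
move=> vT vu; apply/setP => x; rewrite !inE; apply/idP/idP.
  apply: connect_restr_sub => z /connect_restr_in.
  by rewrite !in_setD1 vu vT in_setT => /(_ isT) /andP[-> _].
apply: connect_restr_sub => z vz.
have : z \in setT :\ u by apply: connect_restr_in vz; rewrite !inE vu.
rewrite !inE andbT => zu.
rewrite zu /=; apply: contraL vT => kz; rewrite !inE negbK.
by apply: connect_trans kz _; rewrite (sym_connect_sym (restr_sym _)).
Qed.

Lemma Tbar_proper k u x : e k u -> e u x -> x != k ->
  Tbar e x u \proper Tbar e u k.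
Proof.
move=> eku eux xk; have euk : e u k by rewrite esym.
have xT := nbr_Tbar euk eux xk.
rewrite [Tbar e x u]Tbar_edge 1?esym // Tbar_edge //; apply/properP; split.
  apply/subsetP => y; rewrite !inE => xy.
  apply: (@connect_trans _ _ x).
    by apply: connect1; rewrite /restr /= eux !inE xk edge_neq.
  apply: connect_restr_sub xy => z xz; rewrite !inE andbT.
  apply: contraTneq xT => zk; rewrite inE negbK -zk.
  by rewrite inE (sym_connect_sym (restr_sym _)).
exists u; first exact: mem_comp_self.
apply/negP => /(subsetP (comp_sub _)).
by rewrite !inE eqxx andbT eq_sym (edge_neq eux) => /(_ isT).
Qed.

Variable R : realType.
Variable rho : R.
Variable s : V -> V -> R.

Local Notation bT := (btime e rho s).

Lemma nbrs_mem (G : {set V}) u x : (x \in nbrs e G u) = (x \in G) && e u x.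
Proof. by rewrite mem_enum inE. Qed.

Lemma card_comp_nbr (G : {set V}) u v : u \in G -> v \in nbrs e G u ->
  (#|Defs.comp e G u v| < #|G|)%N.
Proof.
move=> uG; rewrite nbrs_mem => /andP[vG euv].
rewrite (cardsD1 u G) uG add1n ltnS; apply/subset_leq_card/comp_sub.
by rewrite !inE vG andbT eq_sym (edge_neq euv).
Qed.

Lemma bt_aux_fuel n m u (G : {set V}) : u \in G ->
  (#|G| <= n)%N -> (#|G| <= m)%N -> bt_aux e rho s n u G = bt_aux e rho s m u G.
Proof.
elim: n m u G => [|n IH] [|m] u G uG Gn Gm //=;
  have G0 : (0 < #|G|)%N by apply/card_gt0P; exists u.
- by rewrite leqNgt G0 in Gn.
- by rewrite leqNgt G0 in Gm.
case nbrsE: (nbrs e G u) => [//|a l].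
congr seqmin; apply/eq_in_map => p; rewrite mem_permutations -nbrsE => pN.
congr seqmax; apply/eq_in_map => j; rewrite mem_iota => /andP[_ jp].
have vN : nth u p j \in nbrs e G u by rewrite -(perm_mem pN) mem_nth.
have ltG := card_comp_nbr uG vN.
by congr (_ + _); apply: IH; rewrite ?mem_comp_self // -ltnS (leq_trans ltG).
Qed.

(* The subtree reached by the (k+1)-th call of u, when u calls its neighbours
   in G in the order p, is fully informed at time [finish_time G u p k]. *)
Definition finish_time (G : {set V}) u p k :=
  let v := nth u p k in k.+1%:R * rho + s u v + bT v (Defs.comp e G u v).

Definition sched_time (G : {set V}) u p :=
  seqmax (mkseq (finish_time G u p) (size p)).

Lemma btimeE u (G : {set V}) : u \in G ->
  bT u G = if nbrs e G u is [::] then 0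
           else seqmin [seq sched_time G u p | p <- permutations (nbrs e G u)].
Proof.
move=> uG; have G0 : (0 < #|G|)%N by apply/card_gt0P; exists u.
rewrite [in LHS]/btime -[#|G|](prednK G0) /=.
case nbrsE: (nbrs e G u) => [//|a l].
congr seqmin; apply/eq_in_map => p; rewrite mem_permutations -nbrsE => pN.
congr seqmax; apply/eq_in_map => j; rewrite mem_iota => /andP[_ jp].
have vN : nth u p j \in nbrs e G u by rewrite -(perm_mem pN) mem_nth.
rewrite /finish_time /=; congr (_ + _).
by apply: bt_aux_fuel; rewrite ?mem_comp_self // -ltnS prednK // card_comp_nbr.
Qed.

Lemma btime_opt u (G : {set V}) : u \in G ->
  exists2 q, perm_eq q (nbrs e G u) & bT u G = sched_time G u q.
Proof.
move=> uG; rewrite btimeE //; case nbrsE: (nbrs e G u) => [|a l].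
  by exists [::].
have /mapP[q] : seqmin [seq sched_time G u p | p <- permutations (a :: l)] \in
                [seq sched_time G u p | p <- permutations (a :: l)].
  apply/seqmin_mem; have : a :: l \in permutations (a :: l).
    by rewrite mem_permutations.
  by case: permutations.
by rewrite mem_permutations => qN ->; exists q.
Qed.

Lemma btime_le_sched u (G : {set V}) p : u \in G -> perm_eq p (nbrs e G u) ->
  bT u G <= sched_time G u p.
Proof.
move=> uG; rewrite btimeE //; case: (nbrs e G u) => [/perm_nilP -> //|a l pN].
by apply/seqmin_le/map_f; rewrite mem_permutations.
Qed.

Lemma finish_le_sched (G : {set V}) u p j : (j < size p)%N ->
  finish_time G u p j <= sched_time G u p.
Proof. by move=> jp; apply: seqmax_ge; apply: map_f; rewrite mem_iota. Qed.

Lemma sched_le (G : {set V}) u p c : p != [::] ->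
  (forall j, (j < size p)%N -> finish_time G u p j <= c) -> sched_time G u p <= c.
Proof.
move=> p0 le_c; apply: seqmax_le; first by rewrite -size_eq0 size_mkseq size_eq0.
by move=> x /mapP[j]; rewrite mem_iota => /andP[_ /le_c le_jc] ->.
Qed.

Hypothesis rho_gt0 : 0 < rho.
Hypothesis ssym : forall u v, s u v = s v u.
Hypothesis s_ge0 : forall u v, e u v -> 0 <= s u v.

Lemma btime_ge_nbr k u : e k u -> rho + s k u + bT u (Tbar e u k) <= bT k setT.
Proof.
move=> eku; have [q qN ->] := btime_opt (in_setT k).
have uq : u \in q by rewrite (perm_mem qN) nbrs_mem in_setT.
have jq : (index u q < size q)%N by rewrite index_mem.
apply: le_trans (finish_le_sched setT k jq).
rewrite /finish_time nth_index // Tbar_edge 1?esym //.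
have : rho <= (index u q).+1%:R * rho by rewrite ler_pMl // ler1n.
rewrite /Tsub; lra.
Qed.

Lemma nbrs_Tbar u k : e u k ->
  perm_eq (k :: nbrs e (Tbar e u k) u) (nbrs e setT u).
Proof.
move=> euk; apply: uniq_perm; rewrite /= ?enum_uniq ?andbT //.
  by rewrite nbrs_mem inE mem_comp_self.
move=> x; rewrite in_cons !nbrs_mem in_setT.
have [->|xk] := eqVneq x k; first by rewrite euk.
by case: (boolP (e u x)) => [eux|_]; rewrite ?andbF ?andbT // nbr_Tbar.
Qed.

(* u calls k first and then runs an optimal schedule of Tbar u k, one step late. *)
Lemma btime_le_call_first u k c : e u k ->
  rho + s u k + bT k (Tbar e k u) <= c -> rho + bT u (Tbar e u k) <= c ->
  bT u setT <= c.
Proof.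
move=> euk le_kc le_uc; have eku : e k u by rewrite esym.
have [q qN bTq] := btime_opt (in_Tbar (edge_neq eku)).
have kqN : perm_eq (k :: q) (nbrs e setT u).
  by apply: perm_trans (nbrs_Tbar euk); rewrite perm_cons.
apply: le_trans (btime_le_sched (in_setT u) kqN) _.
apply: sched_le => // -[_|j] /=; rewrite /finish_time /=.
  by rewrite mul1r -[Defs.comp _ _ _ _]/(Tsub e u k) -Tbar_edge.
rewrite ltnS => jq; set v := nth u q j.
have : v \in nbrs e (Tbar e u k) u by rewrite -(perm_mem qN) mem_nth.
rewrite nbrs_mem => /andP[vT euv].
rewrite -[Defs.comp _ _ _ v]/(Tsub e u v) -(comp_Tbar vT) 1?eq_sym ?edge_neq //.
have := finish_le_sched (Tbar e u k) u jq; rewrite -bTq /finish_time /= -/v.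
rewrite -addn1 natrD mulrDl mul1r; lra.
Qed.

Lemma broadcast_center_step k u : broadcast_center e rho s k -> e k u ->
  bT k (Tbar e k u) < bT u (Tbar e u k) -> broadcast_center e rho s u.
Proof.
move=> ck eku gain v; apply: le_trans (ck v).
have ge_k := btime_ge_nbr eku; have s_ku := s_ge0 eku.
by apply: btime_le_call_first; [rewrite esym | rewrite ssym; lra | lra].
Qed.

Lemma prime_or_gain k : broadcast_center e rho s k ->
  prime_broadcast_center e rho s k \/
  exists2 u, e k u & bT k (Tbar e k u) < bT u (Tbar e u k).
Proof.
move=> ck.
case: (boolP [forall u, e k u ==> (bT u (Tbar e u k) <= bT k (Tbar e k u))]).
  by move/forallP => noGain; left; split=> // u; apply/implyP.
by case/forallPn=> u; rewrite negb_imply -ltNge => /andP[eku gain]; right; exists u.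
Qed.

Lemma prime_center_descent n k u : (#|Tbar e u k| <= n)%N -> e k u ->
  broadcast_center e rho s u -> bT k (Tbar e k u) < bT u (Tbar e u k) ->
  exists k0, prime_broadcast_center e rho s k0.
Proof.
elim: n k u => [|n IH] k u Tn eku cu gain.
  move: Tn; rewrite leqn0 cards_eq0 => /eqP T0.
  by have := in_Tbar (edge_neq eku); rewrite T0 inE.
have [pu|[x eux gx]] := prime_or_gain cu; first by exists u.
have xk : x != k by apply: contraTneq gx => ->; rewrite -leNgt ltW.
apply: (IH u x _ eux (broadcast_center_step cu eux gx) gx).
by rewrite -ltnS (leq_trans (proper_card (Tbar_proper eku eux xk)) Tn).
Qed.

Lemma exists_prime_broadcast_center : (0 < #|V|)%N ->
  exists k, prime_broadcast_center e rho s k.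
Proof.
case/card_gt0P => i0 _.
have [k0 _ k0_min] := arg_minP (fun v => bT v setT) (isT : predT i0).
have ck0 : broadcast_center e rho s k0 by move=> v; exact: k0_min.
have [pk0|[u eku gain]] := prime_or_gain ck0; first by exists k0.
exact: prime_center_descent (leqnn _) eku (broadcast_center_step ck0 eku gain) gain.
Qed.

End Broadcast.

Theorem lemma3 (V : finType) (e : rel V) (R : realType) (rho : R)
    (wlo wup s : V -> V -> R) :
  is_tree e -> 0 < rho ->
  (forall u v, wlo u v = wlo v u /\ wup u v = wup v u) ->
  (forall u v, e u v -> 0 <= wlo u v <= wup u v) ->
  is_scenario e wlo wup s ->
  exists k : V, prime_broadcast_center e rho s k.
Proof.
move=> [V0 [esym eirr] econn eacyc] rho_gt0 _ w_ge0 [ssym s_in].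
have s_ge0 u v : e u v -> 0 <= s u v.
  move=> euv; have /andP[w0 _] := w_ge0 u v euv.
  by have /andP[ws _] := s_in u v euv; exact: le_trans ws.
exact: (exists_prime_broadcast_center esym (fun x => negbTE (eirr x)) econn eacyc
          rho_gt0 ssym s_ge0 V0).
Qed.
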